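(* Let $\alpha\in(0,1)$ be irrational and let $B_1,B_2,\dots$ be the Minkowski chain of $\alpha$ (case $n=1$). Then $|\det B_k|=1$ for all $k\ge1$.
   Context: Minkowski chain: Let $n\ge1$, $\ell=n+1$, $(\alpha_1,\dots,\alpha_n)\in\mathbb{R}^n$ with $\alpha_1,\dots,\alpha_n,1$ linearly independent over $\mathbb{Q}$. For $r=(r_1,\dots,r_\ell)\in\mathbb{Z}^\ell$ put $\xi(r)=r_1\alpha_1+\cdots+r_n\alpha_n+r_\ell$. For a real matrix or vector, $\|\cdot\|_\infty$ is the maximum absolute value of its entries. For $m\in\mathbb{Z}^+$, $A_m$ is the nonsingular integral $\ell\times\ell$ matrix with rows $w_1,\dots,w_\ell$ chosen successively: $w_i$ is the vector $w\in\mathbb{Z}^\ell$ with $\|w\|_\infty\le m$, linearly independent of $w_1,\dots,w_{i-1}$, minimizing $|\xi(w)|$, normalized so that its first nonzero entry is positive (unique by the linear independence hypothesis). The Minkowski chain $B_1,B_2,\dots$ is the sequence of distinct matrices among $A_1,A_2,A_3,\dots$ in order of appearance ($B_1=A_1$). Here $n=1$ and $\alpha_1=\alpha$. *)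

From Stdlib Require Import Reals ZArith.
Open Scope R_scope.

(* Case n = 1, l = 2.  A vector r = (r1, r2) in Z^2; xi(r) = r1*alpha + r2. *)
Definition vec := (Z * Z)%type.
(* A 2x2 integral matrix, given by its rows (w1, w2). *)
Definition mat := (vec * vec)%type.

Definition xi (alpha : R) (r : vec) : R := IZR (fst r) * alpha + IZR (snd r).

Definition supnorm (r : vec) : Z := Z.max (Z.abs (fst r)) (Z.abs (snd r)).

Definition normalized (r : vec) : Prop :=
  (0 < fst r)%Z \/ (fst r = 0%Z /\ (0 < snd r)%Z).

Definition lin_indep1 (w : vec) : Prop := w <> (0%Z, 0%Z).
Definition lin_indep2 (w1 w2 : vec) : Prop :=
  forall a b : Z,
    (a * fst w1 + b * fst w2 = 0)%Z -> (a * snd w1 + b * snd w2 = 0)%Z ->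
    a = 0%Z /\ b = 0%Z.

Definition IsRow1 (alpha : R) (m : nat) (w : vec) : Prop :=
  (supnorm w <= Z.of_nat m)%Z /\ lin_indep1 w /\ normalized w /\
  forall v : vec, (supnorm v <= Z.of_nat m)%Z -> lin_indep1 v ->
    Rabs (xi alpha w) <= Rabs (xi alpha v).

Definition IsRow2 (alpha : R) (m : nat) (w1 w2 : vec) : Prop :=
  (supnorm w2 <= Z.of_nat m)%Z /\ lin_indep2 w1 w2 /\ normalized w2 /\
  forall v : vec, (supnorm v <= Z.of_nat m)%Z -> lin_indep2 w1 v ->
    Rabs (xi alpha w2) <= Rabs (xi alpha v).

Definition IsA (alpha : R) (m : nat) (A : mat) : Prop :=
  IsRow1 alpha m (fst A) /\ IsRow2 alpha m (fst A) (snd A).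

Definition det2 (A : mat) : Z :=
  (fst (fst A) * snd (snd A) - snd (fst A) * fst (snd A))%Z.

Definition is_new (A : nat -> mat) (m : nat) : Prop :=
  (1 <= m)%nat /\ forall j : nat, (1 <= j < m)%nat -> A j <> A m.

(* B_1, B_2, ... is the Minkowski chain of alpha: the distinct matrices among
   A_1, A_2, ... in order of appearance.  t enumerates (increasingly) the
   positions of first appearance. *)
Definition MinkowskiChain (alpha : R) (B : nat -> mat) : Prop :=
  exists (A : nat -> mat) (t : nat -> nat),
    (forall m : nat, (1 <= m)%nat -> IsA alpha m (A m)) /\
    (forall k : nat, (1 <= k)%nat -> is_new A (t k)) /\
    (forall k : nat, (1 <= k)%nat -> (t k < t (S k))%nat) /\
    (forall m : nat, is_new A m -> exists k : nat, (1 <= k)%nat /\ t k = m) /\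
    (forall k : nat, (1 <= k)%nat -> B k = A (t k)).

Definition irrational (x : R) : Prop :=
  ~ exists p q : Z, q <> 0%Z /\ x = IZR p / IZR q.

From Stdlib Require Import Reals ZArith.
From Stdlib Require Import Lia Lra Psatz.
Open Scope R_scope.

(* Write A_m = (w1, w2) and D = det (w1, w2).
   - Irrationality of alpha makes xi injective on Z^2.
   - The first row w1 is primitive: if w1 = g w' with g >= 2 then w' is a
     shorter vector with |xi w'| < |xi w1|.  By Bezout there is u with
     det (w1, u) = 1.
   - |xi w1| < |xi w2| strictly, since equality would force w2 = +-w1.
   - Suppose |D| >= 2.  Shifting u by a multiple of w1 we may assume
     b = det (u, w2) satisfies 2|b| <= |D|.  Cramer's rule gives
     D u = b w1 + w2, so u lies in the box of w1 and w2, is independent of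
     w1 (det (w1, u) = 1), and |D| |xi u| <= |b| |xi w1| + |xi w2| forces
     |xi u| < |xi w2|: this contradicts the choice of w2.  Hence |D| = 1. *)

Lemma lin_indep2_det (w1 w2 : vec) :
  lin_indep2 w1 w2 <-> det2 (w1, w2) <> 0%Z.
Proof.
  destruct w1 as [q1 p1], w2 as [q2 p2]; unfold lin_indep2, det2; simpl.
  split.
  - intros Hind HD.
    destruct (Hind q2 (- q1)%Z) as [Hq2 Hq1]; [lia | lia |].
    destruct (Hind p2 (- p1)%Z) as [Hp2 Hp1]; [lia | lia |].
    destruct (Hind 1%Z 0%Z); lia.
  - intros HD a b Hq Hp.
    assert (Ha : (a * (q1 * p2 - p1 * q2) = (a * q1 + b * q2) * p2
                                          - (a * p1 + b * p2) * q2)%Z) by ring.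
    assert (Hb : (b * (q1 * p2 - p1 * q2) = (a * p1 + b * p2) * q1
                                          - (a * q1 + b * q2) * p1)%Z) by ring.
    rewrite Hq, Hp in Ha, Hb. split; nia.
Qed.

Lemma cramer_fst (w1 w2 v : vec) :
  (det2 (w1, w2) * fst v = det2 (v, w2) * fst w1 + det2 (w1, v) * fst w2)%Z.
Proof. unfold det2; simpl; ring. Qed.

Lemma cramer_snd (w1 w2 v : vec) :
  (det2 (w1, w2) * snd v = det2 (v, w2) * snd w1 + det2 (w1, v) * snd w2)%Z.
Proof. unfold det2; simpl; ring. Qed.

Lemma xi_cramer (alpha : R) (w1 w2 v : vec) :
  IZR (det2 (w1, w2)) * xi alpha v
  = IZR (det2 (v, w2)) * xi alpha w1 + IZR (det2 (w1, v)) * xi alpha w2.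
Proof.
  unfold xi, det2; simpl.
  rewrite !minus_IZR, !mult_IZR. ring.
Qed.

Lemma nearest_multiple (a D : Z) :
  D <> 0%Z -> exists k, (2 * Z.abs (a + k * D) <= Z.abs D)%Z.
Proof.
  intros HD.
  pose proof (Z.div_mod a D HD) as Hdiv.
  pose proof (Z.mod_bound_or a D HD) as Hbound.
  set (q := (a / D)%Z) in *. set (r := (a mod D)%Z) in *.
  destruct (Z_le_gt_dec (2 * Z.abs r) (Z.abs D)).
  - exists (- q)%Z. replace (a + - q * D)%Z with r by lia. lia.
  - exists (- q - 1)%Z. replace (a + (- q - 1) * D)%Z with (r - D)%Z by lia. lia.
Qed.

(* If |D| x = |b| y + z with |D| >= 2 and |b| <= |D|/2, then x inherits the
   bound M of y and z.  This keeps the reduced vector inside the box. *)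
Lemma coord_bound (D b x y z M : Z) :
  (2 <= Z.abs D)%Z -> (2 * Z.abs b <= Z.abs D)%Z ->
  (Z.abs y <= M)%Z -> (Z.abs z <= M)%Z -> (D * x = b * y + z)%Z ->
  (Z.abs x <= M)%Z.
Proof.
  intros HD Hb Hy Hz Hx.
  assert (Htri : (Z.abs D * Z.abs x <= Z.abs b * Z.abs y + Z.abs z)%Z).
  { rewrite <- Z.abs_mul, Hx, <- (Z.abs_mul b y). apply Z.abs_triangle. }
  pose proof (Z.abs_nonneg b). nia.
Qed.

Lemma weighted_lt (D b y s t : R) :
  2 <= D -> 0 <= b -> 2 * b <= D -> 0 <= s < t -> D * y <= b * s + t -> y < t.
Proof. intros. nra. Qed.

Lemma Rabs_eq_cases (x y : R) : Rabs x = Rabs y -> x = y \/ x = - y.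
Proof. unfold Rabs; destruct (Rcase_abs x), (Rcase_abs y); intros; lra. Qed.

Section FixedAlpha.

Variable alpha : R.
Hypothesis Hirr : irrational alpha.

Lemma xi_eq_0 (w : vec) : xi alpha w = 0 -> w = (0%Z, 0%Z).
Proof.
  destruct w as [q p]; unfold xi; simpl; intros H.
  destruct (Z.eq_dec q 0) as [->|Hq].
  - f_equal. apply eq_IZR. simpl in H. lra.
  - exfalso. apply Hirr. exists (- p)%Z, q. split; [exact Hq |].
    rewrite opp_IZR. field_simplify_eq; [lra | now apply not_0_IZR].
Qed.

Lemma xi_inj (w w' : vec) : xi alpha w = xi alpha w' -> w = w'.
Proof.
  destruct w as [q p], w' as [q' p']; intros H.
  assert (H0 : xi alpha ((q - q')%Z, (p - p')%Z) = 0).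
  { unfold xi in *; simpl in *. rewrite !minus_IZR. lra. }
  apply xi_eq_0 in H0. injection H0 as Hq Hp. f_equal; lia.
Qed.

Lemma row1_complement (m : nat) (w1 : vec) :
  IsRow1 alpha m w1 -> exists u : vec, det2 (w1, u) = 1%Z.
Proof.
  destruct w1 as [q p]. intros [Hbox [Hnz [_ Hmin]]].
  set (g := Z.gcd q p).
  assert (Hg : (0 < g)%Z).
  { pose proof (Z.gcd_nonneg q p).
    enough (g <> 0%Z) by lia.
    unfold g; rewrite Z.gcd_eq_0. intros [-> ->]. now apply Hnz. }
  destruct (Z_le_gt_dec g 1) as [Hg1 | Hg2].
  - destruct (Z.gcd_bezout q p 1) as [x [y Hxy]]; [unfold g in Hg1; lia |].
    exists ((- y)%Z, x). unfold det2; simpl. lia.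
  - exfalso.
    destruct (Z.gcd_divide_l q p) as [q' Hq'].
    destruct (Z.gcd_divide_r q p) as [p' Hp'].
    fold g in Hq', Hp'.
    assert (Hbox' : (supnorm (q', p') <= Z.of_nat m)%Z).
    { unfold supnorm in *; simpl in *.
      rewrite Hq', Hp', !Z.abs_mul, (Z.abs_eq g) in Hbox by lia. nia. }
    assert (Hnz' : lin_indep1 (q', p')).
    { intros E; injection E as -> ->. apply Hnz. now rewrite Hq', Hp'. }
    assert (Hscale : xi alpha (q, p) = IZR g * xi alpha (q', p')).
    { unfold xi; simpl. rewrite Hq', Hp', !mult_IZR. ring. }
    assert (Hpos : 0 < Rabs (xi alpha (q', p'))).
    { apply Rabs_pos_lt. intros E. apply Hnz'. now apply xi_eq_0. }
    assert (Hg2' : 2 <= IZR g) by (apply IZR_le; lia).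
    specialize (Hmin _ Hbox' Hnz').
    rewrite Hscale, Rabs_mult, Rabs_right in Hmin by lra.
    nra.
Qed.

Lemma row1_strictly_better (m : nat) (w1 w2 : vec) :
  IsRow1 alpha m w1 -> IsRow2 alpha m w1 w2 ->
  Rabs (xi alpha w1) < Rabs (xi alpha w2).
Proof.
  intros [_ [_ [_ Hmin1]]] [Hbox2 [Hind _]].
  apply lin_indep2_det in Hind.
  assert (Hnz2 : lin_indep1 w2).
  { intros ->. apply Hind. unfold det2; simpl; ring. }
  destruct (Rle_lt_or_eq_dec _ _ (Hmin1 _ Hbox2 Hnz2)) as [| Heq]; [assumption |].
  exfalso. apply Hind.
  destruct w1 as [q1 p1], w2 as [q2 p2].
  destruct (Rabs_eq_cases _ _ Heq) as [E | E].
  - apply xi_inj in E. injection E as -> ->. unfold det2; simpl; ring.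
  - assert (E' : xi alpha (q1, p1) = xi alpha ((- q2)%Z, (- p2)%Z)).
    { rewrite E. unfold xi; simpl. rewrite !opp_IZR. ring. }
    apply xi_inj in E'. injection E' as -> ->. unfold det2; simpl; ring.
Qed.

(* Core step: given a unimodular complement u of the first row, a second row
   with |det| >= 2 could be replaced by a shift of u lying in the box, still
   independent of w1, and with strictly smaller |xi| -- impossible. *)
Lemma row2_det_lt_2 (m : nat) (w1 w2 u : vec) :
  IsRow1 alpha m w1 -> IsRow2 alpha m w1 w2 -> det2 (w1, u) = 1%Z ->
  (Z.abs (det2 (w1, w2)) < 2)%Z.
Proof.
  intros HR1 HR2 Hu.
  pose proof (row1_strictly_better m w1 w2 HR1 HR2) as Hlt.
  destruct HR1 as [Hbox1 _], HR2 as [Hbox2 [Hind [_ Hmin2]]].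
  set (D := det2 (w1, w2)) in *.
  apply lin_indep2_det in Hind.
  destruct (Z_lt_le_dec (Z.abs D) 2) as [| HD2]; [assumption | exfalso].
  destruct (nearest_multiple (det2 (u, w2)) D Hind) as [k Hk].
  set (v := ((fst u + k * fst w1)%Z, (snd u + k * snd w1)%Z) : vec).
  assert (Hv1 : det2 (w1, v) = 1%Z).
  { rewrite <- Hu. unfold v, det2; simpl; ring. }
  assert (Hv2 : det2 (v, w2) = (det2 (u, w2) + k * D)%Z).
  { unfold v, D, det2; simpl; ring. }
  set (b := (det2 (u, w2) + k * D)%Z) in *.
  assert (Hbox : (supnorm v <= Z.of_nat m)%Z).
  { unfold supnorm in *.
    pose proof (cramer_fst w1 w2 v) as Cf. pose proof (cramer_snd w1 w2 v) as Cs.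
    rewrite Hv1, Hv2 in Cf, Cs. fold D in Cf, Cs.
    apply Z.max_lub; eapply (coord_bound D b); try eassumption; lia. }
  assert (Hindv : lin_indep2 w1 v) by (apply lin_indep2_det; lia).
  assert (Hsmall : Rabs (xi alpha v) < Rabs (xi alpha w2)).
  { pose proof (xi_cramer alpha w1 w2 v) as Cx.
    rewrite Hv1, Hv2 in Cx. fold D in Cx.
    apply (weighted_lt (IZR (Z.abs D)) (IZR (Z.abs b)) _ (Rabs (xi alpha w1)));
      [apply IZR_le; lia | apply IZR_le; lia | | split; [apply Rabs_pos | exact Hlt] |].
    - rewrite <- mult_IZR. apply IZR_le. lia.
    - rewrite !abs_IZR, <- !Rabs_mult, Cx, Rmult_1_l.
      apply Rabs_triang. }
  specialize (Hmin2 v Hbox Hindv). lra.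
Qed.

Lemma IsA_unimodular (m : nat) (A : mat) :
  IsA alpha m A -> Z.abs (det2 A) = 1%Z.
Proof.
  destruct A as [w1 w2]. intros [HR1 HR2].
  destruct (row1_complement m w1 HR1) as [u Hu].
  pose proof (row2_det_lt_2 m w1 w2 u HR1 HR2 Hu) as Hlt.
  destruct HR2 as [_ [Hind _]]. apply lin_indep2_det in Hind.
  simpl in Hind. lia.
Qed.

End FixedAlpha.

Theorem mainTheorem2 (alpha : R) (Hirr : irrational alpha)
  (H0 : 0 < alpha) (H1 : alpha < 1) (B : nat -> mat)
  (HB : MinkowskiChain alpha B) :
  forall k : nat, (1 <= k)%nat -> Z.abs (det2 (B k)) = 1%Z.
Proof.
  destruct HB as [A [t [HA [Hnew [_ [_ HBt]]]]]].
  intros k Hk. rewrite HBt by exact Hk.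
  destruct (Hnew k Hk) as [Ht _].
  exact (IsA_unimodular alpha Hirr (t k) (A (t k)) (HA (t k) Ht)).
Qed.
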